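(* Let $d\ge 2$ and let $f(t,s)=s^d+\sum_{i=1}^{d}\binom{x_i}{i}t^{i}s^{d-i}$, where $x_i\ge i-1$ are real numbers with $\binom{x_i}{i}>0$ for all $i$, and suppose $x_d\ge d$. If $f(t,s)$ is Lorentzian, then $x_1\ge x_2\ge\cdots\ge x_d$.
   Context: For real $x$ and integer $k\ge0$, $\binom{x}{k}=\frac{x(x-1)\cdots(x-k+1)}{k!}$. A homogeneous polynomial $p$ of degree $d\ge2$ in variables $z_1,\dots,z_n$ with nonnegative real coefficients is Lorentzian if its support (the set of exponent vectors of monomials with nonzero coefficient) is M-convex, and for every $\alpha\in\mathbb{Z}_{\ge0}^n$ with $|\alpha|=d-2$ the quadratic form $\partial^{\alpha}p$ has at most one positive eigenvalue. (For bivariate $p=\sum_{i=0}^d a_i t^i s^{d-i}$ with $a_i\ge0$, this is equivalent to the sequence $(a_i)$ having no internal zeros and satisfying $\big(a_i/\binom{d}{i}\big)^2\ge \frac{a_{i-1}}{\binom{d}{i-1}}\frac{a_{i+1}}{\binom{d}{i+1}}$ for $1\le i\le d-1$.) *)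

From HB Require Import structures.
From mathcomp Require Import all_boot all_order all_algebra.
From mathcomp.multinomials Require Import mpoly.
Set Implicit Arguments. Unset Strict Implicit. Unset Printing Implicit Defensive.
Import Order.TTheory GRing.Theory Num.Theory.
Local Open Scope ring_scope.

Definition rbinom (R : fieldType) (x : R) (k : nat) : R :=
  (\prod_(j < k) (x - j%:R)) / (k`!)%:R.

Definition Mconvex (n : nat) (S : seq 'X_{1..n}) : Prop :=
  forall a b : 'X_{1..n}, a \in S -> b \in S ->
  forall i : 'I_n, (b i < a i)%N ->
  exists2 j : 'I_n, (a j < b j)%N & (a - U_(i) + U_(j))%MM \in S.

(* Symmetric matrix A of a quadratic form q, i.e. q(z) = z^T A z
   (A = Hessian of q divided by 2). *)
Definition qform_matrix (R : fieldType) (n : nat) (q : {mpoly R[n]}) : 'M[R]_n :=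
  \matrix_(i < n, j < n) (((q^`M(j))^`M(i))@_0%MM / 2%:R).

(* A (square) matrix has at most one positive eigenvalue, counted with
   multiplicity: there are no two positive eigenvalues l1, l2 (equal or not)
   with (X - l1)(X - l2) dividing the characteristic polynomial. *)
Definition at_most_one_pos_eigenvalue (R : numFieldType) (n : nat)
  (M : 'M[R]_n) : Prop :=
  ~ exists l1 l2 : R, [/\ 0 < l1, 0 < l2 &
      (('X - l1%:P) * ('X - l2%:P) %| char_poly M)%R].

Definition Lorentzian (R : numFieldType) (n d : nat) (p : {mpoly R[n]}) : Prop :=
  [/\ forall m : 'X_{1..n}, 0 <= p@_m,
      forall m : 'X_{1..n}, m \in msupp p -> mdeg m = d,
      Mconvex (msupp p) &
      forall a : 'X_{1..n}, mdeg a = (d - 2)%N ->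
        at_most_one_pos_eigenvalue (qform_matrix (p^`M[a]))].

Definition tvar : 'I_2 := @Ordinal 2 0 isT.
Definition svar : 'I_2 := @Ordinal 2 1 isT.

Definition fpoly (R : fieldType) (d : nat) (x : nat -> R) : {mpoly R[2]} :=
  'X_svar ^+ d +
  \sum_(1 <= i < d.+1) rbinom (x i) i *: ('X_tvar ^+ i * 'X_svar ^+ (d - i)).

From HB Require Import structures.
From mathcomp Require Import all_boot all_order all_algebra.
From mathcomp.multinomials Require Import mpoly.
From mathcomp Require Import ring lra zify.
Set Implicit Arguments. Unset Strict Implicit. Unset Printing Implicit Defensive.
Import Order.TTheory GRing.Theory Num.Theory.
Local Open Scope ring_scope.

(* Normalise the coefficients of f as b_j = binom(x_j, j) / binom(d, j), which
   equals prod_(k < j) (x_j - k) / (d - k).  The Hessians of the derivatives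
   d_t^k d_s^e f are 2x2 matrices whose determinant conditions say exactly that
   (b_j) is log-concave.  As b_0 = 1 and b_d >= 1 (because x_d >= d), the
   log-concave sequence stays >= 1, and b_i >= 1 forces x_i >= d.  For such x_i
   every factor of b_i is at most q = (x_i - i) / (d - i), so b_i <= q^i; if
   x_(i+1) > x_i then b_(i+1) > q b_i, whence b_i^(i+1) < b_(i+1)^i.  This
   contradicts b_(i+1)^i = b_(i+1)^i b_0 <= b_i^(i+1), again by log-concavity. *)

Section LogConcave.

Variables (R : realFieldType) (b : nat -> R) (n : nat).
Hypothesis b_gt0 : forall j, (j <= n)%N -> 0 < b j.
Hypothesis b_lc : forall j, (0 < j < n)%N -> b j.-1 * b j.+1 <= b j ^+ 2.

Lemma log_concave_ratio j i : (j <= i)%N -> (i < n)%N ->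
  b i.+1 * b j <= b i * b j.+1.
Proof.
elim: i => [|i IH] le_ji lt_in.
  by move: le_ji; rewrite leqn0 => /eqP ->; rewrite mulrC.
have [->|ne_ji] := eqVneq j i.+1; first by rewrite mulrC.
have IHi := IH ltac:(lia) ltac:(lia).
have lc := b_lc (j := i.+1) ltac:(lia).
have := b_gt0 (j := i) ltac:(lia); have := b_gt0 (j := i.+1) ltac:(lia).
have := b_gt0 (j := i.+2) ltac:(lia); have := b_gt0 (j := j) ltac:(lia).
have := b_gt0 (j := j.+1) ltac:(lia).
move: lc IHi => /=; nra.
Qed.

Lemma log_concave_pow i m : (m <= i)%N -> (i < n)%N ->
  b i.+1 ^+ m * b (i - m) <= b i ^+ m.+1.
Proof.
move=> + lt_in; elim: m => [|m IH] le_mi.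
  by rewrite expr0 mul1r subn0 expr1.
have := log_concave_ratio (j := (i - m.+1)) (i := i) ltac:(lia) lt_in.
rewrite (_ : (i - m.+1).+1 = i - m)%N; last by lia.
have IHm := IH ltac:(lia).
have := b_gt0 (j := i.+1) ltac:(lia); have := b_gt0 (j := i) ltac:(lia).
have : 0 <= b i.+1 ^+ m by rewrite exprn_ge0 // ltW // b_gt0.
rewrite [b i.+1 ^+ m.+1]exprS [b i ^+ m.+2]exprS.
move: IHm; set P := b i.+1 ^+ m; set Q := b i ^+ m.+1; nra.
Qed.

(* A positive log-concave sequence is monotone on each side of any step,
   so it dominates the smaller of its two end values. *)
Lemma log_concave_ge1 i : 1 <= b 0 -> 1 <= b n -> (i <= n)%N -> 1 <= b i.
Proof.
move=> b0 bn; case: i => [//|i] le_in.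
have [le_i|lt_i] := leP (b i) (b i.+1).
  suff nondecr m : (m <= i.+1)%N -> 1 <= b m by exact: nondecr.
  elim: m => [//|m IH] le_mi; apply: le_trans (IH (ltnW le_mi)) _.
  have := log_concave_ratio (j := m) (i := i) ltac:(lia) ltac:(lia).
  have := b_gt0 (j := m) ltac:(lia); have := b_gt0 (j := i) ltac:(lia); nra.
suff nonincr m : (i.+1 + m <= n)%N -> b (i.+1 + m) <= b i.+1.
  by apply: le_trans bn _; have := nonincr (n - i.+1)%N; rewrite subnKC //; apply.
elim: m => [|m IH] le_mn; first by rewrite addn0.
apply: le_trans (IH ltac:(lia)).
have := log_concave_ratio (j := i) (i := (i.+1 + m)) ltac:(lia) ltac:(lia); rewrite addnS.
have := b_gt0 (j := i) ltac:(lia); have := b_gt0 (j := (i.+1 + m)) ltac:(lia); nra.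
Qed.

End LogConcave.

(* binom(y, j) / binom(d, j), by [rbinom_binom_ratio]. *)
Definition binom_ratio {R : fieldType} (d : nat) (y : R) (j : nat) : R :=
  \prod_(k < j) ((y - k%:R) / (d%:R - k%:R)).

Lemma binom_ratio0 (R : fieldType) d (y : R) : binom_ratio d y 0 = 1.
Proof. by rewrite /binom_ratio big_ord0. Qed.

Lemma rbinom_binom_ratio (R : numFieldType) d (y : R) j : (j <= d)%N ->
  rbinom y j = 'C(d, j)%:R * binom_ratio d y j.
Proof.
move=> le_jd; rewrite /rbinom /binom_ratio prodf_div.
have fact_neq0 m : (m`!)%:R != 0 :> R by rewrite pnatr_eq0 -lt0n fact_gt0.
have ffactE : (d ^_ j)%:R = \prod_(k < j) (d%:R - k%:R) :> R.
  rewrite ffact_prod natr_prod; apply: eq_bigr => k _.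
  by rewrite natrB //; have := ltn_ord k; lia.
have binE : 'C(d, j)%:R = (d ^_ j)%:R / (j`!)%:R :> R.
  by rewrite -bin_ffact natrM mulfK.
have ffact_neq0 : (d ^_ j)%:R != 0 :> R by rewrite pnatr_eq0 -lt0n ffact_gt0.
rewrite binE -ffactE; field.
by rewrite ffact_neq0 fact_neq0.
Qed.

Section BinomRatio.

Variables (R : realFieldType) (d : nat).

Lemma binom_ratio_factor_ge1 (y : R) (k : nat) : (k < d)%N -> d%:R <= y ->
  1 <= (y - k%:R) / (d%:R - k%:R).
Proof.
move=> lt_kd le_dy; have : k%:R < d%:R :> R by rewrite ltr_nat.
by move=> lt; rewrite ler_pdivlMr ?subr_gt0 //; lra.
Qed.

Lemma binom_ratio_ge1 (y : R) j : (j <= d)%N -> d%:R <= y -> 1 <= binom_ratio d y j.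
Proof.
move=> le_jd le_dy; rewrite /binom_ratio -[leLHS](expr1n R j).
rewrite -[in leLHS](card_ord j) -prodr_const; apply: ler_prod => k _.
by rewrite ler01 binom_ratio_factor_ge1 //; have := ltn_ord k; lia.
Qed.

(* For [y >= d] the factors [(y - k) / (d - k)] increase with [k]. *)
Lemma binom_ratio_le_pow (y : R) i : (i < d)%N -> d%:R <= y ->
  binom_ratio d y i <= ((y - i%:R) / (d%:R - i%:R)) ^+ i.
Proof.
move=> lt_id le_dy; rewrite /binom_ratio -[X in _ ^+ X](card_ord i) -prodr_const.
apply: ler_prod => k _; have lt_ki := ltn_ord k.
have ge1 := binom_ratio_factor_ge1 (ltn_trans lt_ki lt_id) le_dy.
have le_ki : k%:R <= i%:R :> R by rewrite ler_nat ltnW.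
have lt_id' : i%:R < d%:R :> R by rewrite ltr_nat.
rewrite (le_trans ler01 ge1) /= ler_pdivrMr ?subr_gt0; last lra.
by rewrite mulrAC ler_pdivlMr ?subr_gt0 //; nra.
Qed.

Lemma binom_ratio_ge1_ge (y : R) i : (0 < i <= d)%N -> i%:R - 1 <= y ->
  1 <= binom_ratio d y i -> d%:R <= y.
Proof.
case: i => [//|i] /= le_id; rewrite -natr1 addrK => le_iy.
apply: contraTT; rewrite -!ltNge => lt_yd.
have lt_id : i%:R < d%:R :> R by rewrite ltr_nat.
have factor_in01 (k : 'I_i) : 0 <= (y - k%:R) / (d%:R - k%:R) <= 1.
  have : k%:R + 1 <= i%:R :> R by rewrite natr1 ler_nat.
  by move=> le; rewrite divr_ge0 ?ler_pdivrMr /=; lra.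
have head_le1 : binom_ratio d y i <= 1.
  rewrite -[leRHS](expr1n R i) -[X in _ ^+ X](card_ord i) -prodr_const.
  by apply: ler_prod => k _; apply: factor_in01.
have head_ge0 : 0 <= binom_ratio d y i.
  by apply: prodr_ge0 => k _; case/andP: (factor_in01 k).
rewrite /binom_ratio big_ord_recr /= -/(binom_ratio d y i).
have : (y - i%:R) / (d%:R - i%:R) < 1 by rewrite ltr_pdivrMr ?subr_gt0; lra.
have : 0 <= (y - i%:R) / (d%:R - i%:R) by rewrite divr_ge0; lra.
nra.
Qed.

Lemma pow_binom_ratio_lt (y z : R) i : (0 < i < d)%N -> d%:R <= y -> y < z ->
  binom_ratio d y i ^+ i.+1 < binom_ratio d z i.+1 ^+ i.
Proof.
move=> /andP[i_gt0 lt_id] le_dy lt_yz.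
have lt_id' : i%:R < d%:R :> R by rewrite ltr_nat.
set q := (y - i%:R) / (d%:R - i%:R).
have q_ge0 : 0 <= q by rewrite divr_ge0; lra.
have q_lt : q < (z - i%:R) / (d%:R - i%:R) by rewrite ltr_pM2r ?invr_gt0; lra.
have factor_gt0 (k : 'I_i) : 0 < (y - k%:R) / (d%:R - k%:R).
  apply: (lt_le_trans ltr01); apply: binom_ratio_factor_ge1 => //.
  by have := ltn_ord k; lia.
have By_gt0 : 0 < binom_ratio d y i by apply: prodr_gt0 => k _.
have le_By_Bz : binom_ratio d y i <= binom_ratio d z i.
  apply: ler_prod => k _; rewrite ltW ?factor_gt0 //=.
  rewrite ler_pM2r ?invr_gt0 ?subr_gt0 ?ltr_nat; [lra | by have := ltn_ord k; lia].
have lt_qBy : q * binom_ratio d y i < binom_ratio d z i.+1.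
  rewrite /binom_ratio big_ord_recr /= -!/(binom_ratio _ _ _) -/q.
  by move: le_By_Bz; nra.
have := binom_ratio_le_pow lt_id le_dy; rewrite -/q => le_By_q.
apply: le_lt_trans (_ : (q * binom_ratio d y i) ^+ i < _); last first.
  by rewrite ltrXn2r ?(mulr_ge0 q_ge0 (ltW By_gt0)) //; lia.
by rewrite exprS exprMn ler_wpM2r // exprn_ge0 // ltW.
Qed.

End BinomRatio.

Lemma char_poly_mx2 (R : comNzRingType) (M : 'M[R]_2) :
  char_poly M = ('X - (M 0 0)%:P) * ('X - (M 1 1)%:P) - (M 0 1 * M 1 0)%:P.
Proof.
rewrite /char_poly /char_poly_mx (expand_det_row _ 0) !big_ord_recl big_ord0.
rewrite /cofactor !det_mx11 !mxE /= polyCM.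
rewrite (_ : lift 0 0 = 1 :> 'I_2); last exact/val_inj.
rewrite (_ : lift 1 0 = 0 :> 'I_2); last exact/val_inj.
by rewrite /= !mulr1n !mulr0n expr0 expr1 !mul1r addr0 sub0r; ring.
Qed.

(* If the determinant were positive, both roots of the characteristic
   polynomial [X^2 - (p + r) X + (p r - q^2)] would be positive. *)
Lemma at_most_one_pos_eigenvalue_mx2 (R : rcfType) (M : 'M[R]_2) :
  at_most_one_pos_eigenvalue M -> M 0 1 = M 1 0 ->
  0 <= M 0 0 -> 0 <= M 1 1 -> M 0 0 * M 1 1 <= M 0 1 ^+ 2.
Proof.
rewrite /at_most_one_pos_eigenvalue char_poly_mx2 => M_hyp sym.
rewrite -sym in M_hyp.
move: (M 0 0) (M 1 1) (M 0 1) M_hyp => p r q M_hyp p_ge0 r_ge0.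
rewrite leNgt; apply/negP => det_gt0; apply: M_hyp.
pose s := Num.sqrt ((p - r) ^+ 2 + 4 * q ^+ 2).
have s_ge0 : 0 <= s by apply: sqrtr_ge0.
have s2 : s ^+ 2 = (p - r) ^+ 2 + 4 * q ^+ 2.
  by rewrite sqr_sqrtr // addr_ge0 ?sqr_ge0 // mulr_ge0 ?sqr_ge0.
have lt_s : s < p + r by nra.
exists ((p + r + s) / 2), ((p + r - s) / 2); split; [lra | lra |].
have expand (a b : R) : ('X - a%:P) * ('X - b%:P) = 'X^2 - (a + b)%:P * 'X + (a * b)%:P.
  by rewrite polyCD polyCM; ring.
rewrite !expand.
have -> : (p + r + s) / 2 + (p + r - s) / 2 = p + r by field.
have -> : (p + r + s) / 2 * ((p + r - s) / 2) = p * r - q * q.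
  have -> : (p + r + s) / 2 * ((p + r - s) / 2) = ((p + r) ^+ 2 - s ^+ 2) / 4.
    by field.
  by rewrite s2; field.
by rewrite polyCB addrA.
Qed.

Definition tsmon (i j : nat) : 'X_{1..2} := (U_(tvar) *+ i + U_(svar) *+ j)%MM.

Lemma tsmon_t i j : tsmon i j tvar = i.
Proof. by rewrite !mnmDE !mulmnE !mnm1E /= mul1n mul0n addn0. Qed.

Lemma tsmon_s i j : tsmon i j svar = j.
Proof. by rewrite !mnmDE !mulmnE !mnm1E /= mul1n mul0n. Qed.

Lemma tsmonE (m : 'X_{1..2}) : m = tsmon (m tvar) (m svar).
Proof.
apply/mnmP => -[[|[|//]] lt_l2].
  by rewrite (_ : Ordinal lt_l2 = tvar) ?tsmon_t //; exact/val_inj.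
by rewrite (_ : Ordinal lt_l2 = svar) ?tsmon_s //; exact/val_inj.
Qed.

Lemma tsmonD i j k l : (tsmon i j + tsmon k l)%MM = tsmon (i + k) (j + l).
Proof. by rewrite [LHS]tsmonE !mnmDE !mulmnE !mnm1E /= !mul1n !mul0n !addn0 !add0n. Qed.

Lemma mdeg_tsmon i j : mdeg (tsmon i j) = (i + j)%N.
Proof. by rewrite mdegD !mdegMn !mdeg1 !mul1n. Qed.

Lemma fpoly_tsmon (R : fieldType) d (x : nat -> R) :
  fpoly d x = \sum_(i < d.+1) rbinom (x i) i *: 'X_[tsmon i (d - i)].
Proof.
rewrite /fpoly big_ord_recl /rbinom big_ord0 fact0 divr1 scale1r.
rewrite /tsmon mulm0n add0m subn0 mpolyXn; congr (_ + _).
by rewrite big_add1 /= big_mkord; apply: eq_bigr => i _; rewrite mpolyXD !mpolyXn.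
Qed.

Lemma mcoeff_fpoly (R : fieldType) d (x : nat -> R) i j : (i + j = d)%N ->
  (fpoly d x)@_(tsmon i j) = rbinom (x i) i.
Proof.
move=> <-; rewrite fpoly_tsmon raddf_sum (bigD1 (inord i)) //=.
rewrite inordK ?ltnS ?leq_addr // addKn mcoeffZ mcoeffX eqxx mulr1 big1 ?addr0 //.
move=> k ne_ki; rewrite mcoeffZ mcoeffX.
case: eqP => [eq_tsmon|]; last by rewrite mulr0.
case/eqP: ne_ki; apply/val_inj; rewrite /= inordK ?ltnS ?leq_addr //.
by rewrite -[k : nat](tsmon_t k (i + j - k)) eq_tsmon tsmon_t.
Qed.

Lemma mcoeff_mderivm_tsmon (R : comNzRingType) (p : {mpoly R[2]}) k e i j :
  (p^`M[tsmon k e])@_(tsmon i j) =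
  p@_(tsmon (k + i) (e + j)) *+ ((k + i) ^_ k * (e + j) ^_ e).
Proof.
rewrite mcoeff_mderivm tsmonD !big_ord_recl big_ord0 muln1.
rewrite (_ : ord0 = tvar); last exact/val_inj.
by rewrite (_ : lift tvar ord0 = svar) ?tsmon_t ?tsmon_s //; exact/val_inj.
Qed.

Lemma qform_matrixE (R : fieldType) n (q : {mpoly R[n]}) i l :
  qform_matrix q i l = q@_(U_(i) + U_(l))%MM *+ ((U_(i))%MM l).+1 / 2%:R.
Proof. by rewrite /qform_matrix mxE !mcoeff_mderiv mnm0E add0m. Qed.

Lemma bin_ffactM n m k l : (k <= n)%N -> (l <= m)%N ->
  ('C(n + m, n) * (n ^_ k * m ^_ l) * ((n - k)`! * (m - l)`!) = (n + m)`!)%N.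
Proof.
move=> le_kn le_lm; have := bin_fact (leq_addr m n); rewrite addKn => <-.
by rewrite -mulnA mulnACA !ffact_fact.
Qed.

Lemma mcoeff_mderivm_fpoly (R : numFieldType) d (x : nat -> R) k e i j :
  d = (k + i + (e + j))%N ->
  ((fpoly d x)^`M[tsmon k e])@_(tsmon i j) * (i`! * j`!)%:R =
  (d`!)%:R * binom_ratio d (x (k + i)%N) (k + i).
Proof.
move=> ->; rewrite mcoeff_mderivm_tsmon mcoeff_fpoly //.
rewrite (rbinom_binom_ratio _ (leq_addr (e + j) (k + i))) -mulr_natr.
have := bin_ffactM (leq_addr i k) (leq_addr j e); rewrite !addKn => <-.
by rewrite !natrM; ring.
Qed.

Lemma Lorentzian_fpoly_log_concave (R : rcfType) d (x : nat -> R) :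
  Lorentzian d (fpoly d x) -> forall j, (0 < j < d)%N ->
  binom_ratio d (x j.-1) j.-1 * binom_ratio d (x j.+1) j.+1 <=
  binom_ratio d (x j) j ^+ 2.
Proof.
move=> [coef_ge0 _ _ hess] [//|k] /andP[_ lt_kd] /=.
pose b j := binom_ratio d (x j) j; rewrite -!/(b _).
have b_ge0 j : (j <= d)%N -> 0 <= b j.
  move=> le_jd; have := coef_ge0 (tsmon j (d - j)).
  by rewrite mcoeff_fpoly ?subnKC // (rbinom_binom_ratio _ le_jd) pmulr_rge0 ?ltr0n ?bin_gt0.
pose e := (d - k.+2)%N; pose c : R := (d`!)%:R / 2.
pose M := qform_matrix ((fpoly d x)^`M[tsmon k e]).
have entry (l m : 'I_2) i j : (U_(l) + U_(m))%MM = tsmon i j -> (i + j = 2)%N ->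
    ((U_(l))%MM m).+1 = (i`! * j`!)%N -> M l m = c * b (k + i)%N.
  move=> Ulm ij2 fact_ij; rewrite qform_matrixE Ulm fact_ij -[X in X / _]mulr_natr.
  by rewrite mcoeff_mderivm_fpoly /c; [rewrite mulrAC | rewrite /e; lia].
have Ut : U_(tvar)%MM = tsmon 1 0 by rewrite [LHS]tsmonE !mnm1E.
have Us : U_(svar)%MM = tsmon 0 1 by rewrite [LHS]tsmonE !mnm1E.
have Mtt : M tvar tvar = c * b k.+2.
  by rewrite (entry _ _ 2%N 0%N) ?Ut ?tsmonD ?tsmon_t ?addn2.
have Mss : M svar svar = c * b k.
  by rewrite (entry _ _ 0%N 2%N) ?Us ?tsmonD ?tsmon_s ?addn0.
have Mts : M tvar svar = c * b k.+1.
  by rewrite (entry _ _ 1%N 1%N) ?Ut ?Us ?tsmonD ?tsmon_s ?addn1.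
have Mst : M svar tvar = c * b k.+1.
  by rewrite (entry _ _ 1%N 1%N) ?Ut ?Us ?tsmonD ?tsmon_t ?addn1.
have c_gt0 : 0 < c by rewrite divr_gt0 ?ltr0n ?fact_gt0.
have mdeg_a : mdeg (tsmon k e) = (d - 2)%N by rewrite mdeg_tsmon /e; lia.
have := at_most_one_pos_eigenvalue_mx2 (hess _ mdeg_a).
have -> : 0 = tvar :> 'I_2 by exact/val_inj.
have -> : 1 = svar :> 'I_2 by exact/val_inj.
rewrite -/M Mtt Mss Mts Mst mulrACA exprMn ler_pM2l ?(mulr_gt0 c_gt0 c_gt0) // => lc.
by rewrite mulrC lc // mulr_ge0 ?(ltW c_gt0) // b_ge0 // ltnW // ltnW.
Qed.

Theorem mainTheorem4 (R : rcfType) (d : nat) (x : nat -> R) :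
  (2 <= d)%N ->
  (forall i : nat, (1 <= i <= d)%N -> i%:R - 1 <= x i) ->
  (forall i : nat, (1 <= i <= d)%N -> 0 < rbinom (x i) i) ->
  d%:R <= x d ->
  Lorentzian d (fpoly d x) ->
  forall i : nat, (1 <= i < d)%N -> x i.+1 <= x i.
Proof.
move=> _ x_lb rbinom_gt0 x_d_ge hL i /andP[i_gt0 lt_id].
pose b j := binom_ratio d (x j) j.
have b0 : b 0%N = 1 by apply: binom_ratio0.
have b_gt0 j : (j <= d)%N -> 0 < b j.
  case: j => [|j] le_jd; first by rewrite b0.
  have := rbinom_gt0 j.+1 le_jd; rewrite (rbinom_binom_ratio _ le_jd).
  by rewrite pmulr_rgt0 // ltr0n bin_gt0.
have b_lc := Lorentzian_fpoly_log_concave hL.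
have b_i_ge1 : 1 <= b i.
  apply: (log_concave_ge1 b_gt0 b_lc); first by rewrite b0.
    exact: binom_ratio_ge1 (leqnn d) x_d_ge.
  exact: ltnW.
have x_i_ge : d%:R <= x i.
  by apply: (binom_ratio_ge1_ge _ (x_lb i _)); rewrite ?i_gt0 // ltnW.
rewrite leNgt; apply/negP => x_lt.
have := log_concave_pow b_gt0 b_lc (leqnn i) lt_id.
by rewrite subnn b0 mulr1 leNgt pow_binom_ratio_lt ?i_gt0.
Qed.
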